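(* Let $\mathcal{B}$ be a complete topological ring and let $\mathrm{e}\colon\mathcal{B}\to\mathcal{B}\{T\}$ be a restricted exponential homomorphism. Assume that $\mathrm{e}$ has a local slice $s\in\mathcal{B}$ such that $\mathrm{e}(s)=s+T$. Then $\mathcal{B}\cong\mathcal{B}^{\mathrm{e}}\{s\}$ (that is, the continuous $\mathcal{B}^{\mathrm{e}}$-algebra homomorphism $\mathcal{B}^{\mathrm{e}}\{S\}\to\mathcal{B}$, $S\mapsto s$, is an isomorphism of topological rings), and under this identification $\mathrm{e}$ coincides with the homomorphism of topological $\mathcal{B}^{\mathrm{e}}$-algebras $\mathcal{B}^{\mathrm{e}}\{s\}\to\mathcal{B}^{\mathrm{e}}\{s\}\{T\}\cong\mathcal{B}^{\mathrm{e}}\{s,T\}$, $s\mapsto s+T$.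
   Context: Conventions: topological rings are linearly topologized with a countable fundamental system of open ideals; homomorphisms are continuous; complete means the canonical map to $\varprojlim_{\mathfrak{a}}\mathcal{B}/\mathfrak{a}$ (open ideals, discrete quotients) is a topological isomorphism. For a complete topological ring $\mathcal{C}$, $\mathcal{C}\{T_1,\dots,T_r\}$ denotes restricted power series (coefficients converging to $0$), topologized by the ideals of series with all coefficients in a given open ideal of $\mathcal{C}$. A restricted exponential homomorphism is a continuous ring homomorphism $\mathrm{e}\colon\mathcal{B}\to\mathcal{B}\{T\}$, $\mathrm{e}(b)=\sum_i\mathrm{e}_i(b)T^i$, with $\mathrm{e}_0=\mathrm{id}_{\mathcal{B}}$ and $\sum_{i,j}\mathrm{e}_j(\mathrm{e}_i(b))T'^jT^i=\sum_\ell\mathrm{e}_\ell(b)(T+T')^\ell$ in $\mathcal{B}\{T,T'\}$ for all $b$. $\mathcal{B}^{\mathrm{e}}=\{b:\mathrm{e}(b)=b\}$ with the induced topology (a complete subring). A local slice is $s\in\mathcal{B}$ with $\mathrm{e}(s)$ a polynomial of degree $1$ in $T$. *)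

From HB Require Import structures.
From mathcomp Require Import all_boot all_order all_algebra.
Set Implicit Arguments. Unset Strict Implicit. Unset Printing Implicit Defensive.
Import GRing.Theory.
Local Open Scope ring_scope.

Section LinTop.
Variable B : comPzRingType.

Definition is_ideal (P : B -> Prop) : Prop :=
  [/\ P 0, (forall x y, P x -> P y -> P (x + y)) & (forall r x, P x -> P (r * x))].

(* A linear topology with a countable fundamental system of open ideals,
   given (w.l.o.g.) as a decreasing chain I 0 ⊇ I 1 ⊇ ... of ideals. *)
Definition lin_top (I : nat -> B -> Prop) : Prop :=
  (forall n, is_ideal (I n)) /\ (forall n x, I n.+1 x -> I n x).

(* Completeness: B -> lim_n B / I n is bijective (topological iso is then
   automatic).  Injectivity: Hausdorff; surjectivity: every compatible
   system (x n mod I n)_n lifts. *)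
Definition complete (I : nat -> B -> Prop) : Prop :=
  (forall b, (forall n, I n b) -> b = 0) /\
  (forall x : nat -> B, (forall n, I n (x n.+1 - x n)) ->
     exists b, forall n, I n (x n - b)).

(* Coefficient sequences of restricted power series: coefficients -> 0. *)
Definition restricted (I : nat -> B -> Prop) (a : nat -> B) : Prop :=
  forall n, exists N, forall k, (N <= k)%N -> I n (a k).

Definition pconv (a b : nat -> B) : nat -> B :=
  fun k => \sum_(i < k.+1) a i * b (k - i)%N.

Definition pone : nat -> B := fun k => (k == 0%N)%:R.

Definition sums (I : nat -> B -> Prop) (u : nat -> B) (b : B) : Prop :=
  forall n, exists N, forall m, (N <= m)%N -> I n (\sum_(k < m) u k - b).

(* e : B -> B{T}, b |-> sum_i (e b i) T^i, is a restricted exponential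
   homomorphism. *)
Definition restricted_exp (I : nat -> B -> Prop) (e : B -> nat -> B) : Prop :=
  (forall b, restricted I (e b)) /\
  (forall x y k, e (x + y) k = e x k + e y k) /\
  (forall x y k, e (x * y) k = pconv (e x) (e y) k) /\
  (forall k, e 1 k = pone k) /\
  (forall n, exists m, forall b, I m b -> forall k, I n (e b k)) /\
  (forall b, e b 0%N = b) /\
  (forall b i j, e (e b i) j = ('C(i + j, i))%:R * e b (i + j)%N).
      (* coefficient of T^i T'^j in
         sum_{i,j} e_j(e_i b) T'^j T^i = sum_l e_l(b) (T+T')^l *)

Definition fixed (e : B -> nat -> B) (b : B) : Prop :=
  forall k, e b k = (k == 0%N)%:R * b.

(* Elements of B^e{S}: restricted sequences with coefficients in B^e. *)
Definition in_fixed_series (I : nat -> B -> Prop) (e : B -> nat -> B)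
  (a : nat -> B) : Prop := restricted I a /\ forall k, fixed e (a k).

End LinTop.

From mathcomp Require Import all_boot all_order all_algebra.
From mathcomp Require Import ring.
From Stdlib Require Import ClassicalEpsilon FunctionalExtensionality.
Set Implicit Arguments. Unset Strict Implicit. Unset Printing Implicit Defensive.
Import GRing.Theory.
Local Open Scope ring_scope.

(* The Dixmier map pi(x) = sum_j (-s)^j e_j(x) ([dixmier]), i.e. e(x) evaluated at T = -s,
   takes values in B^e: by the cocycle identity for e, the T^i-coefficient of e(pi x)
   carries the factor (1 - 1)^i.  It is continuous and additive, fixes B^e and kills s^k
   for k > 0, so pi(sum_k a_k s^k) = a_0.  Since e acts on sum_k a_k s^k by S |-> S + T,
   applying pi to the coefficients of e(sum_k a_k s^k) recovers the a_k, which gives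
   injectivity and continuity of the inverse.  Surjectivity is the Taylor formula
   b = sum_k pi(e_k b) s^k: summed along its diagonals, the double series
   sum_(j,k) (-s)^j e_j(e_k b) s^k is sum_l e_l(b) (s - s)^l = b. *)

Lemma bin_trinomial m l i : (l <= i)%N ->
  ('C(m + l, l) * 'C(m + i, m + l) = 'C(m + i, i) * 'C(i, l))%N.
Proof.
move=> li; have mli : (m + l <= m + i)%N by rewrite leq_add2l.
have Cml := bin_fact (leq_addl m l); rewrite addnK in Cml.
have Cmi := bin_fact (leq_addl m i); rewrite addnK in Cmi.
have := bin_fact mli; rewrite subnDl => Cmil.
have Cil := bin_fact li.
(* both sides, multiplied by l! m! (i - l)!, equal (m + i)! *)
apply/eqP; rewrite -(eqn_pmul2r (_ : 0 < l`! * m`! * (i - l)`!)%N); last first.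
  by rewrite !muln_gt0 !fact_gt0.
apply/eqP; transitivity ('C(m + i, m + l) * ('C(m + l, l) * (l`! * m`!) * (i - l)`!))%N.
  by ring.
rewrite Cml Cmil; transitivity ('C(m + i, i) * ('C(i, l) * (l`! * (i - l)`!) * m`!))%N.
  by rewrite Cil Cmi.
by ring.
Qed.

Section LinearTopology.
Variables (B : comPzRingType) (I : nat -> B -> Prop).
Hypothesis I_ideal : forall n, is_ideal (I n).
Hypothesis I_hausdorff : forall b, (forall n, I n b) -> b = 0.
Hypothesis I_complete : forall x : nat -> B, (forall n, I n (x n.+1 - x n)) ->
  exists b, forall n, I n (x n - b).

Lemma ideal0 n : I n 0. Proof. by case: (I_ideal n). Qed.
Lemma idealD n x y : I n x -> I n y -> I n (x + y).
Proof. by case: (I_ideal n) => _ + _; apply. Qed.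
Lemma idealMl n r x : I n x -> I n (r * x).
Proof. by case: (I_ideal n) => _ _; apply. Qed.
Lemma idealMr n r x : I n x -> I n (x * r).
Proof. by rewrite mulrC; apply: idealMl. Qed.
Lemma idealN n x : I n x -> I n (- x).
Proof. by rewrite -mulN1r; apply: idealMl. Qed.
Lemma idealB n x y : I n x -> I n y -> I n (x - y).
Proof. by move=> Ix /idealN; apply: idealD. Qed.

Lemma ideal_sum n (T : Type) (r : seq T) (P : pred T) (F : T -> B) :
  (forall i, P i -> I n (F i)) -> I n (\sum_(i <- r | P i) F i).
Proof. by move=> IF; apply: (big_ind (I n)); [apply: ideal0 | apply: idealD |]. Qed.

Lemma ideal_sum_nat n a b (F : nat -> B) : (forall k, (a <= k)%N -> I n (F k)) ->
  I n (\sum_(a <= k < b) F k).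
Proof. by move=> IF; rewrite big_nat_cond; apply: ideal_sum => k /andP[/andP[/IF]]. Qed.

Lemma partial_sumB (F : nat -> B) a b : (a <= b)%N ->
  \sum_(k < b) F k - \sum_(k < a) F k = \sum_(a <= k < b) F k.
Proof.
move=> ab; rewrite -!(big_mkord xpredT) (big_cat_nat (leq0n a) ab) /=.
by rewrite addrAC subrr add0r.
Qed.

Lemma sums_unique u b c : sums I u b -> sums I u c -> b = c.
Proof.
move=> ub uc; apply/eqP; rewrite -subr_eq0; apply/eqP/I_hausdorff => n.
have [N1 uN1] := ub n; have [N2 uN2] := uc n; set p := \sum_(k < maxn N1 N2) u k.
have -> : b - c = (p - c) - (p - b) by ring.
exact: idealB (uN2 _ (leq_maxr _ _)) (uN1 _ (leq_maxl _ _)).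
Qed.

Lemma sums_partial u b n J : sums I u b -> (forall k, (J <= k)%N -> I n (u k)) ->
  I n (\sum_(k < J) u k - b).
Proof.
move=> ub uJ; have [N uN] := ub n; set p := \sum_(k < maxn J N) u k.
have -> : \sum_(k < J) u k - b = (p - b) - (p - \sum_(k < J) u k) by ring.
rewrite partial_sumB ?leq_maxl //.
by apply: idealB; [apply: uN; rewrite leq_maxr | exact: ideal_sum_nat].
Qed.

Lemma ideal_sums n u b : sums I u b -> (forall k, I n (u k)) -> I n b.
Proof.
move=> ub un; have := idealN (sums_partial (J := 0) ub (fun k _ => un k)).
by rewrite big_ord0 sub0r opprK.
Qed.

Lemma eq_sums u v b : (forall k, u k = v k) -> sums I u b -> sums I v b.
Proof.
move=> uv ub n; have [N uN] := ub n; exists N => m.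
by under eq_bigr do rewrite -uv; apply: uN.
Qed.

Lemma sumsD u v b c : sums I u b -> sums I v c -> sums I (fun k => u k + v k) (b + c).
Proof.
move=> ub vc n; have [N1 uN1] := ub n; have [N2 vN2] := vc n.
exists (maxn N1 N2) => m; rewrite geq_max => /andP[m1 m2].
by rewrite big_split /= opprD addrACA; apply: idealD; [apply: uN1 | apply: vN2].
Qed.

Lemma sumsMl r u b : sums I u b -> sums I (fun k => r * u k) (r * b).
Proof.
move=> ub n; have [N uN] := ub n; exists N => m /uN /(idealMl r).
by rewrite mulrBr mulr_sumr.
Qed.

Lemma sumsMr r u b : sums I u b -> sums I (fun k => u k * r) (b * r).
Proof. by move/(sumsMl r); rewrite mulrC; apply: eq_sums => k; rewrite mulrC. Qed.

Lemma sums_finite u J : (forall k, (J <= k)%N -> u k = 0) ->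
  sums I u (\sum_(k < J) u k).
Proof.
move=> u0 n; exists J => m Jm; rewrite partial_sumB // big_nat_cond big1.
  exact: ideal0.
by move=> k /andP[/andP[/u0]].
Qed.

Lemma sums0 : sums I (fun=> 0) 0.
Proof. by have := @sums_finite (fun=> 0) 0; rewrite big_ord0; apply. Qed.

Lemma sums_sum (F : nat -> nat -> B) (L : nat -> B) p :
  (forall l, sums I (F^~ l) (L l)) ->
  sums I (fun j => \sum_(l < p) F j l) (\sum_(l < p) L l).
Proof.
move=> FL; elim: p => [|p IH].
  by rewrite big_ord0; apply: eq_sums sums0 => k; rewrite big_ord0.
by rewrite big_ord_recr; apply: eq_sums (sumsD IH (FL p)) => k; rewrite big_ord_recr.
Qed.

Lemma sums_shift u b l : (forall j, (j < l)%N -> u j = 0) -> sums I u b ->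
  sums I (fun m => u (m + l)%N) b.
Proof.
move=> u0 ub n; have [N uN] := ub n; exists N => M NM.
have := uN (M + l)%N (leq_trans NM (leq_addr _ _)).
rewrite -(big_mkord xpredT) (big_cat_nat (leq0n l) (leq_addl M l)) /=.
rewrite big_nat_cond big1 ?add0r; last by move=> j /andP[/andP[_ /u0]].
by rewrite -{1}(add0n l) big_addn addnK big_mkord.
Qed.

Lemma restrictedMl u r : restricted I u -> restricted I (fun k => r k * u k).
Proof. by move=> ur n; have [N uN] := ur n; exists N => k /uN; apply: idealMl. Qed.

Lemma restrictedMr u r : restricted I u -> restricted I (fun k => u k * r k).
Proof. by move=> ur n; have [N uN] := ur n; exists N => k /uN; apply: idealMr. Qed.

Lemma restricted_sums u : restricted I u -> exists b, sums I u b.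
Proof.
move=> ur.
have N n : {N | forall k, (N <= k)%N -> I n (u k)}.
  exact/constructive_indefinite_description/ur.
pose M := fix M n := if n is n'.+1 then maxn (M n') (sval (N n)) else sval (N 0%N).
have M_incr : {homo M : m n / (m <= n)%N}.
  by apply: (homo_leq (r := leq) leqnn leq_trans) => n; apply: leq_maxl.
have N_le_M n : (sval (N n) <= M n)%N by case: n => [|n] //=; rewrite leq_maxr.
have uM n k : (M n <= k)%N -> I n (u k).
  by move=> Mk; apply: (svalP (N n)); apply: leq_trans Mk.
have [b Mb] : exists b, forall n, I n (\sum_(k < M n) u k - b).
  apply: I_complete => n; rewrite partial_sumB ?M_incr //.
  by apply: ideal_sum_nat => k /uM.
exists b => n; exists (M n) => m Mm.
have -> : \sum_(k < m) u k - b
    = (\sum_(k < m) u k - \sum_(k < M n) u k) + (\sum_(k < M n) u k - b) by ring.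
by rewrite partial_sumB //; apply: idealD; [apply: ideal_sum_nat => k /uM | exact: Mb].
Qed.

Definition series_sum (u : nat -> B) : B :=
  epsilon (inhabits 0) (fun b => sums I u b).

Lemma series_sum_eq u b : sums I u b -> series_sum u = b.
Proof.
move=> ub; have ex : exists b, sums I u b by exists b.
exact: sums_unique (epsilon_spec (inhabits 0) _ ex) ub.
Qed.

Lemma series_sum_sums u : restricted I u -> sums I u (series_sum u).
Proof. by case/restricted_sums => b ub; rewrite (series_sum_eq ub). Qed.

Definition restricted2 (f : nat -> nat -> B) : Prop :=
  forall n, exists N, forall j k, (N <= j + k)%N -> I n (f j k).

Definition diagonal (f : nat -> nat -> B) (l : nat) : B :=
  \sum_(k < l.+1) f (l - k)%N k.

Lemma sum_diagonal f K :
  \sum_(l < K) diagonal f l = \sum_(k < K) \sum_(j < K - k) f j k.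
Proof.
elim: K => [|K IH]; first by rewrite !big_ord0.
rewrite big_ord_recr /= IH /diagonal.
transitivity (\sum_(k < K.+1) (\sum_(j < K - k) f j k + f (K - k)%N k)).
  rewrite big_split /= [in RHS]big_ord_recr /= subnn big_ord0 addr0.
  by rewrite (big_ord_recr K (fun k => f (K - k)%N k)).
by apply: eq_bigr => k _; rewrite subSn ?big_ord_recr // -ltnS.
Qed.

Lemma restricted_diagonal f : restricted2 f -> restricted I (diagonal f).
Proof.
move=> fr n; have [N fN] := fr n; exists N => l Nl.
by apply: ideal_sum => k _; apply: fN; rewrite subnK // -ltnS.
Qed.

Lemma sums_diagonal f g c : restricted2 f -> (forall k, sums I (f^~ k) (g k)) ->
  sums I (diagonal f) c -> sums I g c.
Proof.
move=> fr fg fc n; have [N fN] := fr n; have [N' fN'] := fc n.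
exists (maxn N N') => K; rewrite geq_max => /andP[NK N'K].
set S := \sum_(k < K) \sum_(j < K) f j k.
have columns : I n (\sum_(k < K) g k - S).
  rewrite /S -sumrB; apply: ideal_sum => k _; rewrite -opprB; apply/idealN.
  apply: sums_partial (fg k) _ => j Kj; apply: fN.
  exact: leq_trans NK (leq_trans Kj (leq_addr _ _)).
have triangle : I n (S - \sum_(l < K) diagonal f l).
  rewrite sum_diagonal /S -sumrB; apply: ideal_sum => k _.
  rewrite (partial_sumB (f^~ k)) ?leq_subr //; apply: ideal_sum_nat => j Kj; apply: fN.
  by apply: (leq_trans NK); rewrite addnC -leq_subLR.
have -> : \sum_(k < K) g k - c
    = (\sum_(k < K) g k - S) + (S - \sum_(l < K) diagonal f l)
      + (\sum_(l < K) diagonal f l - c).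
  by rewrite !addrA !subrK.
by apply: idealD; [apply: idealD | apply: fN'].
Qed.

Lemma sums_pconv u v b c : restricted I u -> restricted I v ->
  sums I u b -> sums I v c -> sums I (pconv u v) (b * c).
Proof.
move=> ur vr ub vc; pose f j k := v j * u k.
have fr : restricted2 f.
  move=> n; have [N1 uN1] := ur n; have [N2 vN2] := vr n.
  exists (N1 + N2)%N => j k jk; rewrite /f; case: (leqP N2 j) => [/vN2/idealMr //|jN2].
  apply: idealMl; apply: uN1; rewrite -(leq_add2r N2) (leq_trans jk) //.
  by rewrite [(k + N2)%N]addnC leq_add2r ltnW.
have [d fd] := restricted_sums (restricted_diagonal fr).
have := sums_diagonal fr (fun k => sumsMr (u k) vc) fd.
move/(sums_unique (sumsMl c ub)) => cbd; rewrite mulrC cbd.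
by apply: eq_sums fd => l; apply: eq_bigr => k _; rewrite mulrC.
Qed.

Section ExponentialHomomorphism.
Variable e : B -> nat -> B.
Hypothesis e_restricted : forall b, restricted I (e b).
Hypothesis eD : forall x y k, e (x + y) k = e x k + e y k.
Hypothesis eM : forall x y k, e (x * y) k = pconv (e x) (e y) k.
Hypothesis e1 : forall k, e 1 k = pone B k.
Hypothesis e_cont : forall n, exists m, forall b, I m b -> forall k, I n (e b k).
Hypothesis e_coef0 : forall b, e b 0%N = b.
Hypothesis e_comp : forall b i j, e (e b i) j = ('C(i + j, i))%:R * e b (i + j)%N.

Lemma e0 k : e 0 k = 0.
Proof. by apply: (addrI (e 0 k)); rewrite -eD !addr0. Qed.

Lemma eN x k : e (- x) k = - e x k.
Proof. by apply: (addrI (e x k)); rewrite -eD !subrr e0. Qed.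

Lemma eB x y k : e (x - y) k = e x k - e y k.
Proof. by rewrite eD eN. Qed.

Lemma e_sum (F : nat -> B) K k : e (\sum_(i < K) F i) k = \sum_(i < K) e (F i) k.
Proof. by elim/big_ind2: _ => [|x1 x2 y1 y2 <- <-|//]; rewrite ?e0 ?eD. Qed.

Lemma e_sums u b i : sums I u b -> sums I (fun k => e (u k) i) (e b i).
Proof.
move=> ub n; have [m em] := e_cont n; have [N uN] := ub m.
by exists N => M /uN/em/(_ i); rewrite eB e_sum.
Qed.

Lemma eMl_fixed c x k : fixed e c -> e (c * x) k = c * e x k.
Proof.
move=> c_fixed; rewrite eM /pconv big_ord_recl c_fixed mul1r subn0 big1 ?addr0 //.
by move=> i _; rewrite c_fixed mul0r mul0r.
Qed.

Lemma fixed_natr n : fixed e n%:R.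
Proof.
move=> k; elim: n => [|n IH]; first by rewrite e0 mulr0.
by rewrite !mulrS eD IH e1 mulrDr mulr1.
Qed.

Lemma fixedN c : fixed e c -> fixed e (- c).
Proof. by move=> c_fixed k; rewrite eN c_fixed mulrN. Qed.

Lemma fixedM c d : fixed e c -> fixed e d -> fixed e (c * d).
Proof. by move=> c_fixed d_fixed k; rewrite eMl_fixed // d_fixed mulrCA. Qed.

Lemma fixedX c m : fixed e c -> fixed e (c ^+ m).
Proof.
move=> c_fixed; elim: m => [|m IH]; first exact: (fixed_natr 1).
by rewrite exprS; apply: fixedM.
Qed.

Section LocalSlice.
Variable s : B.
Hypothesis e_s : forall k, e s k = (if k == 0%N then s else if k == 1%N then 1 else 0).

Lemma e_sX m l : e (s ^+ m) l = ('C(m, l))%:R * s ^+ (m - l).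
Proof.
elim: m l => [|m IH] l; first by rewrite expr0 e1 /pone bin0n mulr1.
rewrite exprS eM /pconv; case: l => [|l].
  by rewrite big_ord1 e_s IH /= !subn0 !bin0 !mul1r exprS.
rewrite big_ord_recl big_ord_recl big1; last by move=> i _; rewrite e_s /= mul0r.
rewrite addr0 !e_s /= /bump /= !IH mul1r subn0 subn1 /= binS natrD mulrDl.
congr (_ + _); case: (ltnP l m) => lm; first by rewrite mulrCA -exprS subnSK.
by rewrite bin_small ?ltnS // !mul0r mulr0.
Qed.

Lemma e_NsX j l : e ((- s) ^+ j) l = (-1) ^+ j * (('C(j, l))%:R * s ^+ (j - l)).
Proof.
rewrite [(- s) ^+ j]exprNn eMl_fixed ?e_sX //.
by apply: fixedX; apply: fixedN; apply: (fixed_natr 1).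
Qed.

Definition eval_s (a : nat -> B) : B := series_sum (fun k => a k * s ^+ k).

Definition dixmier (x : B) : B := series_sum (fun j => (- s) ^+ j * e x j).

Lemma eval_s_sums a : restricted I a -> sums I (fun k => a k * s ^+ k) (eval_s a).
Proof. by move=> ar; apply: series_sum_sums; apply: restrictedMr. Qed.

Lemma dixmier_sums x : sums I (fun j => (- s) ^+ j * e x j) (dixmier x).
Proof. by apply: series_sum_sums; apply: restrictedMl. Qed.

Lemma dixmierD x y : dixmier (x + y) = dixmier x + dixmier y.
Proof.
apply: series_sum_eq; apply: eq_sums (sumsD (dixmier_sums x) (dixmier_sums y)) => j.
by rewrite eD mulrDr.
Qed.

Lemma dixmierB x y : dixmier (x - y) = dixmier x - dixmier y.
Proof. by apply: (addIr (dixmier y)); rewrite -dixmierD !subrK. Qed.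

Lemma dixmier_sum (F : nat -> B) K :
  dixmier (\sum_(k < K) F k) = \sum_(k < K) dixmier (F k).
Proof.
have dixmier0 : dixmier 0 = 0 by rewrite -(subrr 0) dixmierB !subrr.
by elim/big_ind2: _ => [|x1 x2 y1 y2 <- <-|//]; rewrite ?dixmierD.
Qed.

Lemma dixmier_cont n : exists m, forall x, I m x -> I n (dixmier x).
Proof.
have [m em] := e_cont n; exists m => x /em xm.
by apply: ideal_sums (dixmier_sums x) _ => j; apply: idealMl.
Qed.

Lemma ideal_dixmier_e y n N k : (forall l, (N <= l)%N -> I n (e y l)) ->
  (N <= k)%N -> I n (dixmier (e y k)).
Proof.
move=> yN Nk; apply: ideal_sums (dixmier_sums _) _ => j; rewrite e_comp.
by apply: idealMl; apply: idealMl; apply: yN; apply: leq_trans Nk (leq_addr _ _).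
Qed.

Lemma dixmier_monomial d m : fixed e d -> dixmier (d * s ^+ m) = (m == 0%N)%:R * d.
Proof.
move=> d_fixed; apply: series_sum_eq.
have -> : (m == 0%N)%:R * d = \sum_(j < m.+1) (- s) ^+ j * e (d * s ^+ m) j.
  rewrite -expr0n -{1}(subrr s) exprDn mulrC mulr_sumr; apply: eq_bigr => j _.
  by rewrite eMl_fixed // e_sX -mulr_natl; ring.
apply: sums_finite => j mj.
by rewrite eMl_fixed // e_sX bin_small // mulr0n mul0r !mulr0.
Qed.

Lemma dixmier_series d b : (forall k, fixed e (d k)) ->
  sums I (fun k => d k * s ^+ k) b -> dixmier b = d 0%N.
Proof.
move=> d_fixed db; apply/eqP; rewrite -subr_eq0; apply/eqP/I_hausdorff => n.
have [m dixm] := dixmier_cont n; have [N dN] := db m.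
have := dixm _ (dN N.+1 (leqnSn _)).
rewrite dixmierB (dixmier_sum (fun k => d k * s ^+ k)).
under eq_bigr => k _ do rewrite dixmier_monomial //.
rewrite big_ord_recl big1 /= => [|k _]; last by rewrite mul0r.
by rewrite mul1r addr0 -opprB; apply: idealN.
Qed.

Lemma in_fixed_series_shift a i : in_fixed_series I e a ->
  in_fixed_series I e (fun k => ('C(k + i, i))%:R * a (k + i)%N).
Proof.
case=> ar a_fixed; split=> [n|k]; last by apply: fixedM => //; apply: fixed_natr.
have [N aN] := ar n; exists N => k Nk.
by apply: idealMl; apply: aN; apply: leq_trans Nk (leq_addr _ _).
Qed.

Lemma e_eval_s a i : in_fixed_series I e a ->
  e (eval_s a) i = eval_s (fun k => ('C(k + i, i))%:R * a (k + i)%N).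
Proof.
case=> ar a_fixed; apply/esym/series_sum_eq.
apply: eq_sums (sums_shift (l := i) _ (e_sums i (eval_s_sums ar))) => [k|j ji].
  by rewrite eMl_fixed // e_sX addnK; ring.
by rewrite eMl_fixed // e_sX bin_small // mulr0n mul0r mulr0.
Qed.

Lemma dixmier_e_eval_s a k : in_fixed_series I e a -> dixmier (e (eval_s a) k) = a k.
Proof.
move=> a_fs; have [ar' a_fixed'] := in_fixed_series_shift k a_fs.
by rewrite e_eval_s // (dixmier_series a_fixed' (eval_s_sums ar')) add0n binn mul1r.
Qed.

Lemma e_dixmier_term_coef x m i l : (l <= i)%N ->
  e ((- s) ^+ (m + l)) l * e (e x (m + l)) (i - l)
  = (- s) ^+ m * ('C(m + i, i))%:R * e x (m + i)%N * ((-1) ^+ l *+ 'C(i, l)).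
Proof.
move=> li; rewrite e_NsX e_comp addnK -addnA (subnKC li) exprD [(- s) ^+ m]exprNn.
rewrite -[_ *+ 'C(i, l)]mulr_natr.
have binE : ('C(m + l, l))%:R * ('C(m + i, m + l))%:R
    = ('C(m + i, i))%:R * ('C(i, l))%:R :> B by rewrite -!natrM bin_trinomial.
transitivity ((-1) ^+ m * s ^+ m * e x (m + i)%N * (-1) ^+ l
  * (('C(m + l, l))%:R * ('C(m + i, m + l))%:R)); first by ring.
by rewrite binE; ring.
Qed.

(* Reindexing by m = j - l, the T^i coefficient of e(dixmier x) factors through (1 - 1)^i. *)
Lemma fixed_dixmier x : fixed e (dixmier x).
Proof.
case=> [|i]; first by rewrite e_coef0 mul1r.
pose t j l := e ((- s) ^+ j) l * e (e x j) (i.+1 - l).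
have t_sums l : sums I (t^~ l) (series_sum (t^~ l)).
  apply: series_sum_sums => n; have [N xN] := e_restricted x n; exists N => j Nj.
  rewrite /t e_comp; apply: idealMl; apply: idealMl; apply: xN.
  exact: leq_trans Nj (leq_addr _ _).
have -> : e (dixmier x) i.+1 = \sum_(l < i.+2) series_sum (t^~ l).
  apply: sums_unique (e_sums i.+1 (dixmier_sums x)) _.
  by apply: eq_sums (sums_sum i.+2 t_sums) => j; rewrite eM.
have t_low l j : (j < l)%N -> t j l = 0.
  by move=> jl; rewrite /t e_NsX bin_small // mulr0n mul0r mulr0 mul0r.
have shifted_sums := sums_sum i.+2 (fun l => sums_shift (t_low l) (t_sums l)).
have shifted0 m : \sum_(l < i.+2) t (m + l)%N l = 0.
  rewrite /t (eq_bigr _ (fun (l : 'I_i.+2) _ =>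
    e_dixmier_term_coef x m (ltn_ord l : l <= i.+1)%N)) -mulr_sumr.
  by rewrite -exprD1n addNr expr0n mulr0.
by rewrite mul0r; apply: sums_unique (eq_sums shifted0 shifted_sums) sums0.
Qed.

Lemma taylor_dixmier b : sums I (fun k => dixmier (e b k) * s ^+ k) b.
Proof.
pose f j k := (- s) ^+ j * e (e b k) j * s ^+ k.
have fr : restricted2 f.
  move=> n; have [N bN] := e_restricted b n; exists N => j k Njk.
  rewrite /f e_comp; apply: idealMr; apply: idealMl; apply: idealMl.
  by apply: bN; rewrite addnC.
have diagE l : diagonal f l = e b l * (- s + s) ^+ l.
  rewrite exprDn mulr_sumr; apply: eq_bigr => k _; have kl : (k <= l)%N by rewrite -ltnS.
  by rewrite /f e_comp (subnKC kl) -mulr_natr; ring.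
apply: sums_diagonal fr (fun k => sumsMr _ (dixmier_sums _)) _.
have diag_sums : sums I (diagonal f) (\sum_(l < 1) diagonal f l).
  by apply: sums_finite => -[|l] // _; rewrite diagE addNr expr0n mulr0.
by rewrite big_ord1 diagE expr0 mulr1 e_coef0 in diag_sums.
Qed.

Lemma eval_s_surj b : exists a, in_fixed_series I e a /\ eval_s a = b.
Proof.
exists (fun k => dixmier (e b k)); split; last exact: series_sum_eq (taylor_dixmier b).
split=> [n|k]; last exact: fixed_dixmier.
by have [N bN] := e_restricted b n; exists N => k; apply: ideal_dixmier_e bN.
Qed.

Lemma eval_sD a a' : restricted I a -> restricted I a' ->
  eval_s (fun k => a k + a' k) = eval_s a + eval_s a'.
Proof.
move=> ar ar'; apply: series_sum_eq.
by apply: eq_sums (sumsD (eval_s_sums ar) (eval_s_sums ar')) => k; rewrite mulrDl.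
Qed.

Lemma eval_sM a a' : restricted I a -> restricted I a' ->
  eval_s (pconv a a') = eval_s a * eval_s a'.
Proof.
move=> ar ar'; apply: series_sum_eq.
have := sums_pconv (restrictedMr (fun k => s ^+ k) ar) (restrictedMr (fun k => s ^+ k) ar')
  (eval_s_sums ar) (eval_s_sums ar').
apply: eq_sums => l; rewrite /pconv mulr_suml; apply: eq_bigr => k _.
have -> : s ^+ l = s ^+ k * s ^+ (l - k) by rewrite -exprD subnKC // -ltnS.
by ring.
Qed.

Lemma eval_s1 : eval_s (pone B) = 1.
Proof.
apply: series_sum_eq.
have one_sums : sums I (fun k => pone B k * s ^+ k) (\sum_(k < 1) pone B k * s ^+ k).
  by apply: sums_finite => -[|k] //= _; rewrite /pone mul0r.
by rewrite big_ord1 /pone expr0 mulr1 in one_sums.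
Qed.

Lemma eval_s_inj a a' : in_fixed_series I e a -> in_fixed_series I e a' ->
  eval_s a = eval_s a' -> a = a'.
Proof.
move=> a_fs a'_fs eq_aa'; apply: functional_extensionality => k.
by rewrite -(dixmier_e_eval_s k a_fs) eq_aa' dixmier_e_eval_s.
Qed.

Lemma eval_s_cont n : exists m, forall a, in_fixed_series I e a ->
  (forall k, I m (a k)) -> I n (eval_s a).
Proof.
by exists n => a [ar _] an; apply: ideal_sums (eval_s_sums ar) _ => k; apply: idealMr.
Qed.

Lemma eval_s_inv_cont n : exists m, forall a, in_fixed_series I e a ->
  I m (eval_s a) -> forall k, I n (a k).
Proof.
have [m em] := e_cont n; exists m => a a_fs am k.
rewrite -(dixmier_e_eval_s k a_fs).
by apply: (ideal_dixmier_e (N := 0)) => // l _; apply: em.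
Qed.

End LocalSlice.

End ExponentialHomomorphism.

End LinearTopology.

Theorem corollary2p18 (B : comPzRingType) (I : nat -> B -> Prop)
  (e : B -> nat -> B) (s : B) :
  lin_top I -> complete I -> restricted_exp I e ->
  (* e(s) = s + T *)
  (forall k, e s k = (if k == 0%N then s else if k == 1%N then 1 else 0)) ->
  exists phi : (nat -> B) -> B,
    (* phi is the map B^e{S} -> B, S |-> s *)
        (forall a, in_fixed_series I e a -> sums I (fun k => a k * s ^+ k) (phi a)) /\
        (* it is a ring homomorphism on B^e{S} *)
        (forall a a', in_fixed_series I e a -> in_fixed_series I e a' ->
           phi (fun k => a k + a' k) = phi a + phi a') /\
        (forall a a', in_fixed_series I e a -> in_fixed_series I e a' ->
           phi (pconv a a') = phi a * phi a') /\
        phi (@pone B) = 1 /\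
        (* bijective *)
        (forall a a', in_fixed_series I e a -> in_fixed_series I e a' ->
           phi a = phi a' -> a = a') /\
        (forall b, exists a, in_fixed_series I e a /\ phi a = b) /\
        (* continuous, with continuous inverse *)
        (forall n, exists m, forall a, in_fixed_series I e a ->
           (forall k, I m (a k)) -> I n (phi a)) /\
        (forall n, exists m, forall a, in_fixed_series I e a ->
           I m (phi a) -> forall k, I n (a k)) /\
      (* under phi, e is S |-> S + T: the T^i-coefficient of
           sum_k a_k (S+T)^k is sum_k C(k+i,i) a_(k+i) S^k *)
        (forall a, in_fixed_series I e a -> forall i,
           e (phi a) i = phi (fun k => ('C(k + i, i))%:R * a (k + i)%N)).
Proof.
(* the chain of ideals need not be decreasing *)
move=> [I_ideal _] [I_hausdorff I_complete]
  [e_restricted [eD [eM [e1 [e_cont [e_coef0 e_comp]]]]]] e_s.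
exists (eval_s I s); repeat split.
- by move=> a [ar _]; apply: eval_s_sums.
- by move=> a a' [ar _] [ar' _]; apply: eval_sD.
- by move=> a a' [ar _] [ar' _]; apply: eval_sM.
- by apply: eval_s1.
- by apply: eval_s_inj.
- by apply: eval_s_surj.
- by apply: eval_s_cont.
- by apply: eval_s_inv_cont.
- by move=> a a_fs i; apply: e_eval_s.
Qed.
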